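(* For every integer $\mathcal A\ge 1$ and all widths $w_i\ge 1$ ($i=1,\dots,\mathcal A$), both $\mathcal F^{\text{poly}}_{\mathcal A}$ and $\mathcal F^{\text{DNN}}_{\mathcal A,\bm w}$ are closed under the fix-and-shift transformation: for every $f$ in the class and every $c\in\mathbb R$, the function $f_c(\bm x,z):=f(\bm x,c)+c-z$ (for $(\bm x,z)\in\mathbb R^p\times\mathbb R$) also belongs to the class.
   Context: The $\mathcal A$-th order polynomial space is $\mathcal F^{\text{poly}}_{\mathcal A}=\{f:\mathbb R^p\times\mathbb R\to\mathbb R\mid f(\bm x,z)=\sum_{0\le i_1+\dots+i_p+j\le\mathcal A}\alpha_{i_1,\dots,i_p,j}\,z^j\prod_{k=1}^p x_k^{i_k},\ \alpha_{i_1,\dots,i_p,j}\in\mathbb R\}$. The linear-augmented DNN space of depth $\mathcal A$ with widths $w_0=p+1,w_1,\dots,w_{\mathcal A},w_{\mathcal A+1}=1$ is $\mathcal F^{\text{DNN}}_{\mathcal A,\bm w}=\{f\mid f(\bm x,z)=l^{\text{aug}}((\bm x;z))+l_{\mathcal A}\circ\sigma\circ l_{\mathcal A-1}\circ\cdots\circ\sigma\circ l_0((\bm x;z))\}$, where $(\bm x;z)\in\mathbb R^{p+1}$ is the concatenated input, $l^{\text{aug}}(\bm u)=\bm W^{\text{aug}\top}\bm u$ with $\bm W^{\text{aug}}\in\mathbb R^{w_0}$ arbitrary, $l_i(\bm u)=\bm W_i\bm u+\bm b_i$ with arbitrary $\bm W_i\in\mathbb R^{w_{i+1}\times w_i}$,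 $\bm b_i\in\mathbb R^{w_{i+1}}$ for $i=0,\dots,\mathcal A$, and $\sigma$ is a fixed activation function applied coordinatewise (e.g., ReLU). *)

From mathcomp Require Import all_boot all_order all_algebra.
From mathcomp Require Import reals.
Set Implicit Arguments. Unset Strict Implicit. Unset Printing Implicit Defensive.
Import Order.TTheory GRing.Theory Num.Theory.
Local Open Scope ring_scope.

(* Exponents are bounded by A, so indexed by {ffun 'I_p -> 'I_A.+1} * 'I_A.+1. *)
Definition poly_space (R : realType) (p A : nat) (f : 'cV[R]_p -> R -> R) : Prop :=
  exists alpha : {ffun 'I_p -> 'I_A.+1} -> 'I_A.+1 -> R,
    forall (x : 'cV[R]_p) (z : R),
      f x z = \sum_(e : {ffun 'I_p -> 'I_A.+1})
                \sum_(j : 'I_A.+1 | (\sum_(k < p) (e k : nat) + j <= A)%N)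
                   alpha e j * z ^+ j * \prod_(k < p) x k 0 ^+ (e k).

Definition width (p : nat) (w : nat -> nat) (i : nat) : nat :=
  if i is 0 then (p + 1)%N else w i.

Definition concat_input (R : realType) (p : nat) (x : 'cV[R]_p) (z : R)
  : 'cV[R]_(p + 1) := col_mx x (const_mx z).

Fixpoint hidden (R : realType) (p : nat) (w : nat -> nat) (sigma : R -> R)
  (W : forall k, 'M[R]_(width p w k.+1, width p w k))
  (b : forall k, 'cV[R]_(width p w k.+1))
  (u : 'cV[R]_(p + 1)) (k : nat) : 'cV[R]_(width p w k) :=
  match k with
  | 0 => u
  | k'.+1 => map_mx sigma (W k' *m hidden sigma W b u k' + b k')
  end.

(* Linear-augmented DNN space of depth A (layers l_0..l_A, l_A : R^{w_A} -> R). *)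
Definition dnn_space (R : realType) (p A : nat) (w : nat -> nat) (sigma : R -> R)
  (f : 'cV[R]_p -> R -> R) : Prop :=
  exists (Waug : 'cV[R]_(p + 1))
         (W : forall k, 'M[R]_(width p w k.+1, width p w k))
         (b : forall k, 'cV[R]_(width p w k.+1))
         (WA : 'rV[R]_(width p w A)) (bA : R),
    forall (x : 'cV[R]_p) (z : R),
      f x z = (Waug^T *m concat_input x z) 0 0
              + ((WA *m hidden sigma W b (concat_input x z) A) 0 0 + bA).

Definition fix_shift (R : realType) (p : nat) (f : 'cV[R]_p -> R -> R) (c : R)
  : 'cV[R]_p -> R -> R := fun x z => f x c + c - z.

From mathcomp Require Import all_boot all_order all_algebra.
From mathcomp Require Import reals ring.
Import Order.TTheory GRing.Theory Num.Theory.
Local Open Scope ring_scope.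

(* Polynomials: the class is a linear span of monomials; fixing z = c maps each
   admissible monomial to a multiple of an admissible monomial free of z, and
   c - z is a combination of the monomials 1 and z (admissible since A >= 1).
   Networks: z reaches the network only through the affine first layer l_0 and
   the linear skip connection.  Zeroing the z-column of l_0 and adding its
   value at c to the first bias leaves every hidden layer unchanged, and the
   skip connection is redirected to carry -z, the constants going to the
   output bias. *)

Section PolySpace.
Variables (R : realType) (p A : nat).
Implicit Types (f g : 'cV[R]_p -> R -> R) (e : {ffun 'I_p -> 'I_A.+1}).

Lemma poly_space_ext {f g} :
  poly_space A f -> (forall x z, f x z = g x z) -> poly_space A g.
Proof. by move=> [alpha hf] fg; exists alpha => x z; rewrite -fg. Qed.

Lemma poly_space0 : poly_space A (fun (_ : 'cV[R]_p) (_ : R) => 0).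
Proof.
exists (fun _ _ => 0) => x z.
by rewrite big1 // => e _; rewrite big1 // => j _; rewrite !mul0r.
Qed.

Lemma poly_spaceD {f g} :
  poly_space A f -> poly_space A g -> poly_space A (fun x z => f x z + g x z).
Proof.
move=> [a ha] [b hb]; exists (fun e j => a e j + b e j) => x z.
rewrite ha hb -big_split; apply: eq_bigr => e _.
by rewrite -big_split; apply: eq_bigr => j _; rewrite !mulrDl.
Qed.

Lemma poly_space_sum (I : Type) (r : seq I) (P : pred I)
    (F : I -> 'cV[R]_p -> R -> R) :
  (forall i, P i -> poly_space A (F i)) ->
  poly_space A (fun x z => \sum_(i <- r | P i) F i x z).
Proof.
move=> hF; elim: r => [|i r IH].
  by apply: (poly_space_ext poly_space0) => x z; rewrite big_nil.
case Pi: (P i).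
  apply: (poly_space_ext (poly_spaceD (hF i Pi) IH)) => x z.
  by rewrite big_cons Pi.
by apply: (poly_space_ext IH) => x z; rewrite big_cons Pi.
Qed.

Lemma poly_space_monomial e (j : 'I_A.+1) (a : R) :
  (\sum_(k < p) (e k : nat) + j <= A)%N ->
  poly_space A (fun x z => a * z ^+ j * \prod_(k < p) x k 0 ^+ e k).
Proof.
move=> ej; exists (fun e' j' => if (e' == e) && (j' == j) then a else 0) => x z.
rewrite (bigD1 e) //= [X in _ + X]big1 => [|e' ne]; last first.
  by rewrite big1 // => j' _; rewrite (negbTE ne) !mul0r.
rewrite addr0 (bigD1 j) //= !eqxx /= [X in _ + X]big1 ?addr0 //.
move=> j' /andP[_ nj].
by rewrite (negbTE nj) !mul0r.
Qed.

Lemma poly_space_subst {f} c :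
  poly_space A f -> poly_space A (fun x _ => f x c).
Proof.
move=> [alpha hf].
pose F e (j : 'I_A.+1) (x : 'cV[R]_p) (z : R) :=
  alpha e j * c ^+ j * z ^+ (@ord0 A) * \prod_(k < p) x k 0 ^+ e k.
have hF e (j : 'I_A.+1) :
    (\sum_(k < p) (e k : nat) + j <= A)%N -> poly_space A (F e j).
  move=> ej; apply: poly_space_monomial.
  by rewrite addn0; apply: leq_trans ej; apply: leq_addr.
have hsum : poly_space A (fun x z => \sum_(e : {ffun 'I_p -> 'I_A.+1})
    \sum_(j < A.+1 | (\sum_(k < p) (e k : nat) + j <= A)%N) F e j x z).
  by apply: poly_space_sum => e _; apply: poly_space_sum; apply: hF.
apply: (poly_space_ext hsum) => x z; rewrite hf.
by apply: eq_bigr => e _; apply: eq_bigr => j _; rewrite /F expr0 mulr1.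
Qed.

Lemma poly_space_fix_shift f c :
  (0 < A)%N -> poly_space A f -> poly_space A (fix_shift f c).
Proof.
move=> A_gt0 hf; have A_gt1 : (1 < A.+1)%N by [].
pose e0 : {ffun 'I_p -> 'I_A.+1} := [ffun => ord0].
have e0_deg (j : 'I_A.+1) : (\sum_(k < p) (e0 k : nat) + j <= A)%N.
  by rewrite big1 ?leq_ord // => k _; rewrite ffunE.
have e0_prod (x : 'cV[R]_p) : \prod_(k < p) x k 0 ^+ e0 k = 1.
  by rewrite big1 // => k _; rewrite ffunE expr0.
apply: (poly_space_ext (poly_spaceD (poly_space_subst c hf)
  (poly_spaceD (poly_space_monomial _ _ c (e0_deg ord0))
     (poly_space_monomial _ _ (-1) (e0_deg (Ordinal A_gt1)))))).
move=> x z; rewrite /fix_shift !e0_prod /= expr0 expr1.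
by ring.
Qed.

End PolySpace.

Section DnnSpace.
Variables (R : realType) (p : nat) (w : nat -> nat) (sigma : R -> R).
Implicit Types (W : forall k, 'M[R]_(width p w k.+1, width p w k))
  (b : forall k, 'cV[R]_(width p w k.+1)).

Lemma hiddenS W b (u : 'cV[R]_(p + 1)) k :
  hidden sigma W b u k.+1 = map_mx sigma (W k *m hidden sigma W b u k + b k).
Proof. by []. Qed.

Lemma hidden_first_layer W b W' b' (u u' : 'cV[R]_(p + 1)) k :
  W' 0%N *m u' + b' 0%N = W 0%N *m u + b 0%N ->
  (forall k, W' k.+1 = W k.+1) -> (forall k, b' k.+1 = b k.+1) ->
  hidden sigma W' b' u' k.+1 = hidden sigma W b u k.+1.
Proof.
move=> h0 hW hb; elim: k => [|k IH]; first by rewrite !hiddenS /= h0.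
by rewrite hiddenS IH hW hb.
Qed.

Lemma mulmx_concat_input m (M : 'M[R]_(m, p + 1)) x z :
  M *m concat_input x z = lsubmx M *m x + rsubmx M *m const_mx z.
Proof. by rewrite -{1}(hsubmxK M) mul_row_col. Qed.

Lemma tr_mulmx_concat_input (a : 'cV[R]_(p + 1)) x z :
  (a^T *m concat_input x z) 0 0 = ((usubmx a)^T *m x) 0 0 + dsubmx a 0 0 * z.
Proof.
rewrite -{1}(vsubmxK a) tr_col_mx mul_row_col mxE; congr (_ + _).
by rewrite mxE big_ord1 !mxE.
Qed.

Lemma dnn_space_fix_shift A (f : 'cV[R]_p -> R -> R) c :
  (0 < A)%N -> dnn_space A w sigma f -> dnn_space A w sigma (fix_shift f c).
Proof.
move=> A_gt0 [Waug [W [b [WA [bA hf]]]]].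
pose W' k : 'M_(width p w k.+1, width p w k) :=
  if k is k'.+1 then W k'.+1 else row_mx (lsubmx (W 0%N)) 0.
pose b' k : 'cV_(width p w k.+1) :=
  if k is k'.+1 then b k'.+1 else b 0%N + rsubmx (W 0%N) *m const_mx c.
exists (col_mx (usubmx Waug) (const_mx (-1))), W', b', WA,
  (bA + dsubmx Waug 0 0 * c + c) => x z.
have -> : hidden sigma W' b' (concat_input x z) A
          = hidden sigma W b (concat_input x c) A.
  rewrite -(prednK A_gt0); apply: hidden_first_layer => //.
  rewrite !mulmx_concat_input /= row_mxKl row_mxKr mul0mx addr0.
  by rewrite [b 0%N + _]addrC addrA.
rewrite /fix_shift hf !tr_mulmx_concat_input col_mxKu col_mxKd.
rewrite [const_mx _ _ _]mxE.
by ring.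
Qed.

End DnnSpace.

Theorem lemma2 (R : realType) (p A : nat) (w : nat -> nat) (sigma : R -> R) :
  (1 <= A)%N ->
  (forall i : nat, (1 <= i <= A)%N -> (1 <= w i)%N) ->
  (forall (f : 'cV[R]_p -> R -> R), poly_space A f ->
     forall c : R, poly_space A (fix_shift f c)) /\
  (forall (f : 'cV[R]_p -> R -> R), dnn_space A w sigma f ->
     forall c : R, dnn_space A w sigma (fix_shift f c)).
Proof.
move=> A_gt0 _; split=> f hf c.
  exact: poly_space_fix_shift.
exact: dnn_space_fix_shift.
Qed.
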